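(* At iteration $\ell$ of the procedure, suppose $Z_{X,\ell}\in\mathbb{S}^r_{++}$, $Z_{S,\ell}\in\mathbb{S}^{n-r}_{--}$ (negative definite), and $\|Z_{O,\ell}\|_2\le\frac{3}{4\eta_\ell}$. Then the Sylvester equation $W_O Z_{X,\ell}+(-Z_{S,\ell})W_O=Z_{O,\ell}$ has a unique solution $W_{O,\ell}$ satisfying $\|W_{O,\ell}\|_2\le\eta_\ell\|Z_{O,\ell}\|_2$. Moreover, \begin{align*} &\max\{\|Z_{X,\ell+1}-Z_{X,\ell}\|_2,\ \|Z_{S,\ell+1}-Z_{S,\ell}\|_2,\ \|Z_{O,\ell+1}\|_2\}\\ \le\ &\Big(\tfrac{4}{9}\eta_\ell^4\|Z_0\|_2^3+\tfrac{4}{3}\eta_\ell^3\|Z_0\|_2^2+\tfrac{13}{3}\eta_\ell^2\|Z_0\|_2+4\eta_\ell\Big)\|Z_{O,\ell}\|_2^2 \end{align*} for all $\ell\in\mathbb{N}$.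
   Context: Let $Z=\mathrm{diag}(\lambda_1,\dots,\lambda_n)\in\mathbb{S}^n$ be nonsingular with $\lambda_1\ge\dots\ge\lambda_r>0>\lambda_{r+1}\ge\dots\ge\lambda_n$, and let $H\in\mathbb{S}^n$ be a perturbation. The iterative elimination procedure starts with $Z_0=\begin{bmatrix}Z_{X,0}&Z_{O,0}^{\mathsf T}\\ Z_{O,0}&Z_{S,0}\end{bmatrix}:=Z+H$ (blocks $Z_{X,\ell}\in\mathbb{S}^r$, $Z_{S,\ell}\in\mathbb{S}^{n-r}$, $Z_{O,\ell}\in\mathbb{R}^{(n-r)\times r}$). At iteration $\ell$ it solves $W_O Z_{X,\ell}+(-Z_{S,\ell})W_O=Z_{O,\ell}$ for $W_{O,\ell}$, sets the skew-symmetric matrix $W_\ell=\begin{bmatrix}0&-W_{O,\ell}^{\mathsf T}\\ W_{O,\ell}&0\end{bmatrix}$, and updates $Z_{\ell+1}=\begin{bmatrix}Z_{X,\ell+1}&Z_{O,\ell+1}^{\mathsf T}\\ Z_{O,\ell+1}&Z_{S,\ell+1}\end{bmatrix}:=\exp(W_\ell)^{\mathsf T}Z_\ell\exp(W_\ell)$. Define $d=\sqrt{\min\{r,n-r\}}$ and $\eta_\ell=\dfrac{d}{\lambda_{\min}(Z_{X,\ell})-\lambda_{\max}(Z_{S,\ell})}$. *)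

From HB Require Import structures.
From mathcomp Require Import all_boot all_order all_algebra.
From mathcomp Require Import all_classical all_reals all_analysis.
Set Implicit Arguments. Unset Strict Implicit. Unset Printing Implicit Defensive.
Import Order.TTheory GRing.Theory Num.Theory.
Local Open Scope ring_scope.
Import numFieldNormedType.Exports.
Local Open Scope classical_set_scope.

Section Defs.
Variable R : realType.

Definition vnorm {m : nat} (v : 'cV[R]_m) : R := Num.sqrt (\sum_i v i 0 ^+ 2).

Definition spnorm {m p : nat} (A : 'M[R]_(m, p)) : R :=
  sup [set vnorm (A *m x) | x in [set x : 'cV[R]_p | vnorm x = 1]].

Definition expm {m : nat} (W : 'M[R]_m) : 'M[R]_m :=
  \matrix_(i, j) limn ((fun N => (\sum_(k < N) (k`!%:R)^-1 *: W ^+ k) i j) : R^nat).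

Definition symmx {m : nat} (A : 'M[R]_m) : Prop := A^T = A.
Definition posdef {m : nat} (A : 'M[R]_m) : Prop :=
  symmx A /\ forall x : 'cV[R]_m, x != 0 -> 0 < (x^T *m A *m x) 0 0.
Definition negdef {m : nat} (A : 'M[R]_m) : Prop :=
  symmx A /\ forall x : 'cV[R]_m, x != 0 -> (x^T *m A *m x) 0 0 < 0.

Definition lambda_min {m : nat} (A : 'M[R]_m) : R := inf [set a : R | eigenvalue A a].
Definition lambda_max {m : nat} (A : 'M[R]_m) : R := sup [set a : R | eigenvalue A a].

(* blocks of a (r+s)x(r+s) matrix: Z = [Z_X Z_O^T; Z_O Z_S] *)
Definition ZX {r s : nat} (Z : 'M[R]_(r + s)) : 'M[R]_r := ulsubmx Z.
Definition ZS {r s : nat} (Z : 'M[R]_(r + s)) : 'M[R]_s := drsubmx Z.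
Definition ZO {r s : nat} (Z : 'M[R]_(r + s)) : 'M[R]_(s, r) := dlsubmx Z.

Definition etaZ {r s : nat} (Z : 'M[R]_(r + s)) : R :=
  Num.sqrt (minn r s)%:R / (lambda_min (ZX Z) - lambda_max (ZS Z)).

Definition sylv {r s : nat} (Z : 'M[R]_(r + s)) (WO : 'M[R]_(s, r)) : Prop :=
  WO *m ZX Z + (- ZS Z) *m WO = ZO Z.

Definition Wmat {r s : nat} (WO : 'M[R]_(s, r)) : 'M[R]_(r + s) :=
  block_mx 0 (- WO^T) WO 0.

Definition step {r s : nat} (Z : 'M[R]_(r + s)) (WO : 'M[R]_(s, r)) : 'M[R]_(r + s) :=
  (expm (Wmat WO))^T *m Z *m expm (Wmat WO).

End Defs.

From mathcomp Require Import all_boot all_order all_algebra.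
From mathcomp Require Import all_classical all_reals all_analysis.
From mathcomp Require Import ring lra.
Import Order.TTheory GRing.Theory Num.Theory.
Local Open Scope ring_scope.
Import numFieldNormedType.Exports.
Local Open Scope classical_set_scope.
Set Implicit Arguments. Unset Strict Implicit. Unset Printing Implicit Defensive.

(* The Sylvester operator [W |-> W Z_X - Z_S W] satisfies
   [<W, W Z_X - Z_S W>_F >= (lambda_min(Z_X) - lambda_max(Z_S)) |W|_F^2]
   (Rayleigh quotients of the rows and of the columns of [W]), so it is invertible and
   [|W|_2 <= |W|_F <= |Z_O|_F / gap <= eta |Z_O|_2].
   For skew [W], [exp(W)] is orthogonal (Cauchy product of the exponential series), so the
   iterates keep [|Z_l|_2 <= |Z_0|_2]. Writing [exp(W) = 1 + W + F] with [|F| <= 4/5 |W|^2]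
   when [|W| <= 3/4], the update is [Z + (Z W - W Z) + O(|Z| |W|^2)]; the Sylvester equation
   makes the off-diagonal blocks of [Z + (Z W - W Z)] vanish, while its diagonal blocks move
   by at most [2 |Z_O| |W|]. Substituting [|W| <= eta |Z_O|] gives the bound. *)

Section RealInequalities.
Variable R : realFieldType.

Lemma le_of_sqr_le (a b : R) : 0 <= b -> a ^+ 2 <= b ^+ 2 -> a <= b.
Proof. by move=> b0 ab; nra. Qed.

Lemma quad_ge0_discr (a b c : R) :
  0 <= c -> (forall t, 0 <= a + 2 * b * t + c * t ^+ 2) -> b ^+ 2 <= a * c.
Proof.
move=> c0 ge0; have [cp|] := ltrP 0 c.
  have := ge0 (- b / c).
  have -> : a + 2 * b * (- b / c) + c * (- b / c) ^+ 2 = a - b ^+ 2 / c.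
    by field; rewrite gt_eqF.
  by rewrite subr_ge0 ler_pdivrMr.
move=> cle0; have c00 : c = 0 by apply/eqP; rewrite eq_le cle0 c0.
subst c; have [->|bn0] := eqVneq b 0; first by rewrite expr0n mulr0.
have := ge0 (- (a + 1) / (2 * b)).
have -> : a + 2 * b * (- (a + 1) / (2 * b)) + 0 * (- (a + 1) / (2 * b)) ^+ 2 = -1.
  by field.
by rewrite ler0N1.
Qed.

Lemma cauchy_schwarz_sum (I : finType) (u v : I -> R) :
  (\sum_i u i * v i) ^+ 2 <= (\sum_i u i ^+ 2) * (\sum_i v i ^+ 2).
Proof.
rewrite mulrC; apply: quad_ge0_discr => [|t].
  by apply: sumr_ge0 => i _; exact: sqr_ge0.
have -> : \sum_i v i ^+ 2 + 2 * (\sum_i u i * v i) * t + (\sum_i u i ^+ 2) * t ^+ 2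
    = \sum_i (v i + t * u i) ^+ 2.
  rewrite [RHS](eq_bigr (fun i => v i ^+ 2 + 2 * t * (u i * v i) + t ^+ 2 * u i ^+ 2));
    last by move=> i _; ring.
  by rewrite !big_split /= -!mulr_sumr; ring.
by apply: sumr_ge0 => i _; exact: sqr_ge0.
Qed.

End RealInequalities.

Section EuclideanNorm.
Variable R : realType.

Definition sqnorm {m} (v : 'cV[R]_m) : R := \sum_i v i 0 ^+ 2.
Definition dotv {m} (u v : 'cV[R]_m) : R := \sum_i u i 0 * v i 0.

Lemma sqnorm_ge0 m (v : 'cV[R]_m) : 0 <= sqnorm v.
Proof. by apply: sumr_ge0 => i _; exact: sqr_ge0. Qed.

Lemma vnorm_ge0 m (v : 'cV[R]_m) : 0 <= vnorm v.
Proof. exact: sqrtr_ge0. Qed.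

Lemma vnorm_sqr m (v : 'cV[R]_m) : vnorm v ^+ 2 = sqnorm v.
Proof. by rewrite sqr_sqrtr // sqnorm_ge0. Qed.

Lemma sqnorm_eq0 m (v : 'cV[R]_m) : (sqnorm v == 0) = (v == 0).
Proof.
apply/idP/eqP => [/eqP /psumr_eq0P v0|->]; last first.
  by rewrite /sqnorm big1 // => i _; rewrite mxE expr0n.
apply/matrixP => i j; rewrite ord1 mxE.
by apply/eqP; rewrite -sqrf_eq0; apply/eqP/v0 => // k _; exact: sqr_ge0.
Qed.

Lemma sqnorm_gt0 m (v : 'cV[R]_m) : v != 0 -> 0 < sqnorm v.
Proof. by move=> v0; rewrite lt_def sqnorm_eq0 v0 sqnorm_ge0. Qed.

Lemma vnorm_gt0 m (v : 'cV[R]_m) : v != 0 -> 0 < vnorm v.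
Proof. by move=> v0; rewrite sqrtr_gt0 sqnorm_gt0. Qed.

Lemma sqnorm0 m : sqnorm (0 : 'cV[R]_m) = 0.
Proof. by apply/eqP; rewrite sqnorm_eq0. Qed.

Lemma vnorm0 m : vnorm (0 : 'cV[R]_m) = 0.
Proof. by rewrite /vnorm -/(sqnorm 0) sqnorm0 sqrtr0. Qed.

Lemma sqnormZ m (a : R) (v : 'cV[R]_m) : sqnorm (a *: v) = a ^+ 2 * sqnorm v.
Proof. by rewrite /sqnorm mulr_sumr; apply: eq_bigr => i _; rewrite mxE exprMn. Qed.

Lemma vnormZ m (a : R) (v : 'cV[R]_m) : vnorm (a *: v) = `|a| * vnorm v.
Proof.
by rewrite /vnorm -!/(sqnorm _) sqnormZ sqrtrM ?sqr_ge0 // sqrtr_sqr.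
Qed.

Lemma vnormN m (v : 'cV[R]_m) : vnorm (- v) = vnorm v.
Proof. by rewrite -scaleN1r vnormZ normrN normr1 mul1r. Qed.

Lemma dotv_le m (u v : 'cV[R]_m) : dotv u v <= vnorm u * vnorm v.
Proof.
apply: le_of_sqr_le; first by rewrite mulr_ge0 ?vnorm_ge0.
by rewrite exprMn !vnorm_sqr; exact: cauchy_schwarz_sum.
Qed.

Lemma dotv_mx m (u v : 'cV[R]_m) : dotv u v = (u^T *m v) 0 0.
Proof. by rewrite mxE; apply: eq_bigr => i _; rewrite mxE. Qed.

Lemma sqnorm_mx m (u : 'cV[R]_m) : sqnorm u = (u^T *m u) 0 0.
Proof. by rewrite -dotv_mx; apply: eq_bigr => i _; rewrite expr2. Qed.

Lemma vnormD m (u v : 'cV[R]_m) : vnorm (u + v) <= vnorm u + vnorm v.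
Proof.
apply: le_of_sqr_le; first by rewrite addr_ge0 ?vnorm_ge0.
have -> : vnorm (u + v) ^+ 2 = vnorm u ^+ 2 + 2 * dotv u v + vnorm v ^+ 2.
  rewrite !vnorm_sqr /sqnorm /dotv mulr_sumr -!big_split /=.
  by apply: eq_bigr => i _; rewrite mxE; ring.
by have := dotv_le u v; nra.
Qed.

Lemma vnorm_delta m (j : 'I_m) : vnorm (delta_mx j 0 : 'cV[R]_m) = 1.
Proof.
rewrite /vnorm (bigD1 j) //= big1 ?addr0 ?mxE ?eqxx ?expr1n ?sqrtr1 //.
by move=> k kj; rewrite mxE (negbTE kj) expr0n.
Qed.

Lemma normr_entry_le_vnorm m (v : 'cV[R]_m) i : `|v i 0| <= vnorm v.
Proof.
apply: le_of_sqr_le; first exact: vnorm_ge0.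
rewrite vnorm_sqr real_normK ?num_real // /sqnorm (bigD1 i) //= lerDl.
by apply: sumr_ge0 => k _; exact: sqr_ge0.
Qed.

Lemma vnorm_col_mx m n (u : 'cV[R]_m) (d : 'cV[R]_n) :
  vnorm (col_mx u d) ^+ 2 = vnorm u ^+ 2 + vnorm d ^+ 2.
Proof.
rewrite !vnorm_sqr /sqnorm big_split_ord /=.
by congr (_ + _); apply: eq_bigr => i _; rewrite ?col_mxEu ?col_mxEd.
Qed.

Lemma vnorm_orthmx m (Q : 'M[R]_m) x : Q^T *m Q = 1%:M -> vnorm (Q *m x) = vnorm x.
Proof.
move=> QTQ; rewrite /vnorm -!/(sqnorm _) !sqnorm_mx.
by rewrite trmx_mul -mulmxA (mulmxA Q^T) QTQ mul1mx.
Qed.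

End EuclideanNorm.

Section SpectralNorm.
Variable R : realType.

Definition frob2 {m n} (A : 'M[R]_(m, n)) : R := \sum_i \sum_j A i j ^+ 2.

Lemma frob2_ge0 m n (A : 'M[R]_(m, n)) : 0 <= frob2 A.
Proof. by apply: sumr_ge0 => i _; apply: sumr_ge0 => j _; exact: sqr_ge0. Qed.

Lemma sqnorm_mulmx_le m n (A : 'M[R]_(m, n)) (x : 'cV[R]_n) :
  sqnorm (A *m x) <= frob2 A * sqnorm x.
Proof.
rewrite /sqnorm /frob2 mulr_suml; apply: ler_sum => i _.
by rewrite mxE; exact: cauchy_schwarz_sum.
Qed.

Lemma spnorm_set_ub m n (A : 'M[R]_(m, n)) :
  has_ubound [set vnorm (A *m x) | x in [set x | vnorm x = 1]].
Proof.
exists (Num.sqrt (frob2 A)) => _ [x /= x1 <-].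
rewrite ler_sqrt ?mulr_ge0 ?frob2_ge0 //.
by apply: le_trans (sqnorm_mulmx_le A x) _; rewrite -vnorm_sqr x1 expr1n mulr1.
Qed.

Lemma spnorm_ge0 m n (A : 'M[R]_(m, n)) : 0 <= spnorm A.
Proof.
have [[_ [x /= x1 _]]|no_unit] := pselect
  ([set vnorm (A *m x) | x in [set x | vnorm x = 1]] !=set0).
  by apply: le_trans (vnorm_ge0 (A *m x)) (ub_le_sup (spnorm_set_ub A) _); exists x.
by rewrite /spnorm sup_out // => -[].
Qed.

Lemma spnorm_ub m n (A : 'M[R]_(m, n)) x : vnorm (A *m x) <= spnorm A * vnorm x.
Proof.
have [->|x0] := eqVneq x 0; first by rewrite mulmx0 !vnorm0 mulr0.
have x_gt0 := vnorm_gt0 x0.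
have u1 : vnorm ((vnorm x)^-1 *: x) = 1.
  by rewrite vnormZ ger0_norm ?invr_ge0 ?vnorm_ge0 // mulVf // gt_eqF.
have : vnorm (A *m ((vnorm x)^-1 *: x)) <= spnorm A.
  by apply: ub_le_sup; [exact: spnorm_set_ub | exists ((vnorm x)^-1 *: x)].
rewrite -scalemxAr vnormZ ger0_norm ?invr_ge0 ?vnorm_ge0 //.
by rewrite mulrC -ler_pdivlMr ?invr_gt0 // invrK.
Qed.

Lemma spnorm_le m n (A : 'M[R]_(m, n)) c :
  0 <= c -> (forall x, vnorm (A *m x) <= c * vnorm x) -> spnorm A <= c.
Proof.
move=> c0 Ale; have [ne|no_unit] := pselect
  ([set vnorm (A *m x) | x in [set x | vnorm x = 1]] !=set0).
  by apply: ge_sup => // _ [x /= x1 <-]; rewrite -[c]mulr1 -x1.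
by rewrite /spnorm sup_out // => -[].
Qed.

Lemma spnorm_entry m n (A : 'M[R]_(m, n)) i j : `|A i j| <= spnorm A.
Proof.
have -> : A i j = (A *m delta_mx j (0 : 'I_1)) i 0.
  rewrite mxE (bigD1 j) //= big1 ?addr0 ?mxE ?eqxx ?mulr1 //.
  by move=> k kj; rewrite mxE (negbTE kj) mulr0.
apply: le_trans (normr_entry_le_vnorm _ _) _.
by rewrite -[spnorm A]mulr1 -(vnorm_delta R j) spnorm_ub.
Qed.

Lemma spnorm0 m n : spnorm (0 : 'M[R]_(m, n)) = 0.
Proof.
apply/eqP; rewrite eq_le spnorm_ge0 andbT; apply: spnorm_le => // x.
by rewrite mul0mx vnorm0 mul0r.
Qed.

Lemma spnorm1 m : spnorm (1%:M : 'M[R]_m) <= 1.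
Proof. by apply: spnorm_le => // x; rewrite mul1mx mul1r. Qed.

Lemma spnormD m n (A B : 'M[R]_(m, n)) : spnorm (A + B) <= spnorm A + spnorm B.
Proof.
apply: spnorm_le => [|x]; first by rewrite addr_ge0 ?spnorm_ge0.
by rewrite mulmxDl mulrDl (le_trans (vnormD _ _)) // lerD ?spnorm_ub.
Qed.

Lemma spnormZ m n (a : R) (A : 'M[R]_(m, n)) : spnorm (a *: A) <= `|a| * spnorm A.
Proof.
apply: spnorm_le => [|x]; first by rewrite mulr_ge0 ?spnorm_ge0.
by rewrite -scalemxAl vnormZ -mulrA ler_wpM2l ?spnorm_ub.
Qed.

Lemma spnormN m n (A : 'M[R]_(m, n)) : spnorm (- A) = spnorm A.
Proof.
have le (B : 'M[R]_(m, n)) : spnorm (- B) <= spnorm B.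
  by rewrite -scaleN1r (le_trans (spnormZ _ _)) // normrN normr1 mul1r.
by apply/eqP; rewrite eq_le le /= -{1}(opprK A) le.
Qed.

Lemma spnormM m n p (A : 'M[R]_(m, n)) (B : 'M[R]_(n, p)) :
  spnorm (A *m B) <= spnorm A * spnorm B.
Proof.
apply: spnorm_le => [|x]; first by rewrite mulr_ge0 ?spnorm_ge0.
rewrite -mulmxA (le_trans (spnorm_ub _ _)) //.
by rewrite -mulrA ler_wpM2l ?spnorm_ge0 ?spnorm_ub.
Qed.

Lemma spnorm_sum (I : Type) (s : seq I) (P : pred I) m n (F : I -> 'M[R]_(m, n)) :
  spnorm (\sum_(i <- s | P i) F i) <= \sum_(i <- s | P i) spnorm (F i).
Proof.
elim/big_rec2 : _ => [|i y1 y2 _ IH]; first by rewrite spnorm0.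
by rewrite (le_trans (spnormD _ _)) // lerD2l.
Qed.

Lemma spnormX m (W : 'M[R]_m) k : spnorm (W ^+ k) <= spnorm W ^+ k.
Proof.
elim: k => [|k IH]; first by rewrite !expr0 spnorm1.
rewrite !exprS -mulmxE (le_trans (spnormM _ _)) //.
by rewrite ler_wpM2l ?spnorm_ge0.
Qed.

Lemma spnorm_tr m n (A : 'M[R]_(m, n)) : spnorm A^T = spnorm A.
Proof.
suff le p q (B : 'M[R]_(p, q)) : spnorm B^T <= spnorm B.
  by apply/eqP; rewrite eq_le le /= -{1}(trmxK A) le.
apply: spnorm_le => [|y]; first exact: spnorm_ge0.
(* |B^T y|^2 = <y, B B^T y> <= |y| |B| |B^T y| *)
have [->|By0] := eqVneq (B^T *m y) 0; first by rewrite vnorm0 mulr_ge0 ?spnorm_ge0 ?vnorm_ge0.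
rewrite -(ler_pM2l (vnorm_gt0 By0)) -expr2 vnorm_sqr sqnorm_mx trmx_mul trmxK.
rewrite -mulmxA -dotv_mx (le_trans (dotv_le _ _)) //.
by have := spnorm_ub B (B^T *m y); have := vnorm_ge0 y; nra.
Qed.

Lemma frob2_le m n (A : 'M[R]_(m, n)) : frob2 A <= (minn m n)%:R * spnorm A ^+ 2.
Proof.
suff le_cols p q (B : 'M[R]_(p, q)) : frob2 B <= q%:R * spnorm B ^+ 2.
  have frob2_tr : frob2 A^T = frob2 A.
    by rewrite /frob2 exchange_big; apply: eq_bigr => j _; apply: eq_bigr => i _; rewrite mxE.
  case: (leqP m n) => _; last exact: le_cols.
  by rewrite -frob2_tr -spnorm_tr le_cols.
rewrite /frob2 exchange_big /= -[q in q%:R]card_ord -sum1_card natr_sum mulr_suml.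
apply: ler_sum => j _; rewrite mul1r.
have -> : \sum_i B i j ^+ 2 = vnorm (B *m delta_mx j 0) ^+ 2.
  by rewrite vnorm_sqr -colE; apply: eq_bigr => i _; rewrite mxE.
have := spnorm_ub B (delta_mx j 0); rewrite vnorm_delta mulr1.
by have := vnorm_ge0 (B *m delta_mx j 0); nra.
Qed.

Lemma spnorm_le_frob m n (A : 'M[R]_(m, n)) : spnorm A <= Num.sqrt (frob2 A).
Proof.
apply: spnorm_le => [|x]; first exact: sqrtr_ge0.
rewrite /vnorm -sqrtrM ?frob2_ge0 // ler_sqrt ?mulr_ge0 ?frob2_ge0 ?sqnorm_ge0 //.
exact: sqnorm_mulmx_le.
Qed.

End SpectralNorm.

Section BlockNorms.
Variable R : realType.

Lemma vnorm_usubmx m n (v : 'cV[R]_(m + n)) : vnorm (usubmx v) <= vnorm v.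
Proof.
apply: le_of_sqr_le; first exact: vnorm_ge0.
by rewrite -{2}(vsubmxK v) vnorm_col_mx lerDl sqr_ge0.
Qed.

Lemma vnorm_dsubmx m n (v : 'cV[R]_(m + n)) : vnorm (dsubmx v) <= vnorm v.
Proof.
apply: le_of_sqr_le; first exact: vnorm_ge0.
by rewrite -{2}(vsubmxK v) vnorm_col_mx lerDr sqr_ge0.
Qed.

Lemma spnorm_usubmx m1 m2 n (A : 'M[R]_(m1 + m2, n)) : spnorm (usubmx A) <= spnorm A.
Proof.
apply: spnorm_le => [|x]; first exact: spnorm_ge0.
by rewrite mul_usub_mx (le_trans (vnorm_usubmx _)) ?spnorm_ub.
Qed.

Lemma spnorm_dsubmx m1 m2 n (A : 'M[R]_(m1 + m2, n)) : spnorm (dsubmx A) <= spnorm A.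
Proof.
apply: spnorm_le => [|x]; first exact: spnorm_ge0.
by rewrite mul_dsub_mx (le_trans (vnorm_dsubmx _)) ?spnorm_ub.
Qed.

Lemma spnorm_lsubmx m n1 n2 (A : 'M[R]_(m, n1 + n2)) : spnorm (lsubmx A) <= spnorm A.
Proof. by rewrite -spnorm_tr trmx_lsub -(spnorm_tr A) spnorm_usubmx. Qed.

Lemma spnorm_rsubmx m n1 n2 (A : 'M[R]_(m, n1 + n2)) : spnorm (rsubmx A) <= spnorm A.
Proof. by rewrite -spnorm_tr trmx_rsub -(spnorm_tr A) spnorm_dsubmx. Qed.

Lemma spnorm_Wmat r s (WO : 'M[R]_(s, r)) : spnorm (Wmat WO) <= spnorm WO.
Proof.
apply: spnorm_le => [|x]; first exact: spnorm_ge0.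
rewrite -(vsubmxK x) /Wmat mul_block_col !mul0mx add0r addr0.
apply: le_of_sqr_le; first by rewrite mulr_ge0 ?spnorm_ge0 ?vnorm_ge0.
rewrite exprMn !vnorm_col_mx mulrDr addrC.
have := spnorm_ub (- WO^T) (dsubmx x); rewrite spnormN spnorm_tr.
have := spnorm_ub WO (usubmx x).
have := vnorm_ge0 (- WO^T *m dsubmx x); have := vnorm_ge0 (WO *m usubmx x).
by have := spnorm_ge0 WO; have := vnorm_ge0 (usubmx x); have := vnorm_ge0 (dsubmx x); nra.
Qed.

End BlockNorms.

Section MatrixAlgebra.
Variable R : comRingType.

Lemma trmxX m (W : 'M[R]_m) k : (W ^+ k)^T = W^T ^+ k.
Proof.
elim: k => [|k IH]; first by rewrite !expr0 -idmxE trmx1.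
by rewrite exprS exprSr -!mulmxE trmx_mul IH.
Qed.

Lemma exprNmx m (W : 'M[R]_m) j : (- W) ^+ j = (-1) ^+ j *: W ^+ j.
Proof.
elim: j => [|j IH]; first by rewrite !expr0 scale1r.
by rewrite !exprS IH -!mulmxE mulNmx scalemxAr mulN1r scaleNr mulmxN.
Qed.

Lemma congruence_expand m (Z K F : 'M[R]_m) : K^T = - K ->
  (1%:M + (K + F))^T *m Z *m (1%:M + (K + F)) =
  Z + (Z *m K - K *m Z) + (Z *m F + F^T *m Z + (K + F)^T *m Z *m (K + F)).
Proof.
move=> skewK; rewrite !linearD /= trmx1 skewK.
rewrite !mulmxDl ?mulmxDr ?mul1mx ?mulmx1.
by rewrite !mulNmx; apply/matrixP => i j; rewrite !mxE; ring.
Qed.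

End MatrixAlgebra.

Section EntrywiseLimits.
Variable R : realType.

Definition mxcvg {m n} (A : nat -> 'M[R]_(m, n)) (L : 'M[R]_(m, n)) :=
  forall i j, (fun N => A N i j) @ \oo --> L i j.

Lemma mxcvg_cst m n (L : 'M[R]_(m, n)) : mxcvg (fun=> L) L.
Proof. by move=> i j; exact: cvg_cst. Qed.

Lemma mxcvgD m n (A B : nat -> 'M[R]_(m, n)) L M :
  mxcvg A L -> mxcvg B M -> mxcvg (fun N => A N + B N) (L + M).
Proof.
move=> AL BM i j; rewrite mxE.
under eq_fun do rewrite mxE.
exact: cvgD.
Qed.

Lemma mxcvg_tr m n (A : nat -> 'M[R]_(m, n)) L :
  mxcvg A L -> mxcvg (fun N => (A N)^T) L^T.
Proof. by move=> AL i j; rewrite mxE; under eq_fun do rewrite mxE; exact: AL. Qed.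

Lemma mxcvgM m n p (A : nat -> 'M[R]_(m, n)) (B : nat -> 'M[R]_(n, p)) L M :
  mxcvg A L -> mxcvg B M -> mxcvg (fun N => A N *m B N) (L *m M).
Proof.
move=> AL BM i j; rewrite mxE; under eq_fun do rewrite mxE.
apply: (@cvg_big R 'I_n +%R 0 xpredT add_continuous nat \oo (index_enum _)
  (fun k N => A N i k * B N k j)) => // k _.
exact: cvgM.
Qed.

Lemma mxcvg_uniq m n (A : nat -> 'M[R]_(m, n)) L M :
  mxcvg A L -> mxcvg A M -> L = M.
Proof.
by move=> AL AM; apply/matrixP => i j; rewrite -(cvg_lim _ (AL i j)) // -(cvg_lim _ (AM i j)).
Qed.

Lemma mxcvg_spnorm_le m n (A : nat -> 'M[R]_(m, n)) L b N0 :
  mxcvg A L -> (forall N, (N0 <= N)%N -> spnorm (A N) <= b) -> spnorm L <= b.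
Proof.
move=> AL Ab; have b0 : 0 <= b := le_trans (spnorm_ge0 _) (Ab N0 (leqnn _)).
apply: spnorm_le => // x; apply: le_of_sqr_le; first by rewrite mulr_ge0 ?vnorm_ge0.
have Ax_cvg : (fun N => sqnorm (A N *m x)) @ \oo --> sqnorm (L *m x).
  apply: (@cvg_big R 'I_m +%R 0 xpredT add_continuous nat \oo (index_enum _)
    (fun k N => (A N *m x) k 0 ^+ 2)) => // k _.
  under eq_fun do rewrite expr2.
  by rewrite expr2; apply: cvgM; exact: (mxcvgM AL (mxcvg_cst (L := x))).
rewrite vnorm_sqr -(cvg_lim _ Ax_cvg) //; apply: limr_le; first exact: cvgP Ax_cvg.
exists N0 => // N /= /Ab ANb; rewrite -vnorm_sqr.
have : vnorm (A N *m x) <= b * vnorm x.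
  by rewrite (le_trans (spnorm_ub _ _)) // ler_wpM2r ?vnorm_ge0.
by have := vnorm_ge0 (A N *m x); nra.
Qed.

End EntrywiseLimits.

Section ExponentialTail.
Variable R : realType.

Definition invfact (k : nat) : R := (k`!%:R)^-1.

Lemma invfact_gt0 k : 0 < invfact k.
Proof. by rewrite invr_gt0 ltr0n fact_gt0. Qed.

Definition expm_sum {m} (W : 'M[R]_m) N := \sum_(k < N) invfact k *: W ^+ k.

Lemma expm_sum_cvg m (W : 'M[R]_m) : mxcvg (expm_sum W) (expm W).
Proof.
move=> i j; rewrite mxE.
set u := fun k => invfact k * (W ^+ k) i j.
have -> : (fun N => expm_sum W N i j) = series u.
  apply/funext => N; rewrite seriesEord /expm_sum summxE.
  by apply: eq_bigr => k _; rewrite mxE.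
have /cvg_ex[l ul] : cvgn (series u).
  apply: normed_cvg; apply: (series_le_cvg (v_ := exp_coeff (spnorm W))).
  - by move=> k /=.
  - by move=> k; rewrite /exp_coeff /= mulr_ge0 ?exprn_ge0 ?spnorm_ge0 // invr_ge0.
  - move=> k; rewrite /u /exp_coeff /= normrM ger0_norm ?(ltW (invfact_gt0 _)) // mulrC.
    by rewrite ler_wpM2r ?invr_ge0 // (le_trans (spnorm_entry _ _ _)) ?spnormX.
  - exact: is_cvg_series_exp_coeff.
by rewrite (cvg_lim _ ul).
Qed.

Lemma pow2_le_double_fact k : (2 ^ k <= 2 * k`!)%N.
Proof.
elim: k => [//|k IH]; rewrite expnS factS leq_mul2l /=.
by case: k IH => [//|k] IH; rewrite (leq_trans IH) // leq_pmul2r ?fact_gt0.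
Qed.

Lemma exp_series_tail_le (w : R) N : 0 <= w -> w <= 3 / 4 ->
  \sum_(2 <= k < N) invfact k * w ^+ k <= 4 / 5 * w ^+ 2.
Proof.
move=> w0 w34; set z := w / 2; have z0 : 0 <= z by rewrite divr_ge0.
have term_le k : invfact k * w ^+ k <= 2 * z ^+ k.
  have -> : 2 * z ^+ k = 2 / 2 ^+ k * w ^+ k by rewrite /z expr_div_n mulrA mulrAC.
  rewrite ler_wpM2r ?exprn_ge0 // /invfact ler_pdivlMr ?exprn_gt0 //.
  rewrite -ler_pdivlMl ?ltr0n ?fact_gt0 // mulrC -natrX invrK -natrM ler_nat.
  exact: pow2_le_double_fact.
apply: (le_trans (y := \sum_(2 <= k < N) 2 * z ^+ k)).
  by apply: ler_sum => k _; exact: term_le.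
have [N2|N2] := leqP N 2; first by rewrite big_geq // mulr_ge0 ?exprn_ge0.
rewrite -mulr_sumr.
have geom : (1 - z) * \sum_(2 <= k < N) z ^+ k = z ^+ 2 - z ^+ N.
  have /= tel := @telescope_sumr _ 2 N (fun k => z ^+ k) (ltnW N2).
  rewrite -[RHS]opprB -tel mulr_sumr -sumrN.
  by apply: eq_bigr => k _; rewrite exprS; ring.
have S0 : 0 <= \sum_(2 <= k < N) z ^+ k by apply: sumr_ge0 => k _; rewrite exprn_ge0.
have zN0 : 0 <= z ^+ N by rewrite exprn_ge0.
by rewrite /z in geom S0 zN0 *; nra.
Qed.

Lemma expm_sum_tail m (W : 'M[R]_m) N : (2 <= N)%N ->
  expm_sum W N - 1%:M - W = \sum_(2 <= k < N) invfact k *: W ^+ k.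
Proof.
move=> N2; rewrite /expm_sum -(big_mkord xpredT (fun k => invfact k *: W ^+ k)).
rewrite big_ltn ?(leq_trans _ N2) // big_ltn ?(leq_trans _ N2) //.
rewrite /invfact /= expr0 expr1 !invr1 !scale1r idmxE.
by rewrite [1 + _]addrC addrK addrC addKr.
Qed.

Lemma spnorm_expm_tail m (W : 'M[R]_m) : spnorm W <= 3 / 4 ->
  spnorm (expm W - 1%:M - W) <= 4 / 5 * spnorm W ^+ 2.
Proof.
move=> W34; apply: (@mxcvg_spnorm_le _ _ _ (fun N => expm_sum W N - 1%:M - W) _ _ 2).
  by do 2![apply: mxcvgD; last exact: mxcvg_cst]; exact: expm_sum_cvg.
move=> N N2; rewrite expm_sum_tail //.
apply: le_trans (spnorm_sum _ _ _) (le_trans _ (exp_series_tail_le N (spnorm_ge0 W) W34)).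
apply: ler_sum => k _; apply: le_trans (spnormZ _ _) _.
by rewrite ger0_norm ?(ltW (invfact_gt0 _)) // ler_wpM2l ?(ltW (invfact_gt0 _)) // spnormX.
Qed.

End ExponentialTail.

Lemma sum_triangle (V : zmodType) (F : nat -> nat -> V) N :
  \sum_(0 <= j < N) \sum_(0 <= k < N - j) F j k =
  \sum_(0 <= m < N) \sum_(0 <= j < m.+1) F j (m - j)%N.
Proof.
elim: N => [|N IH]; first by rewrite !big_geq.
rewrite (@eq_big_nat _ _ _ 0 N.+1 _
  (fun j => \sum_(0 <= k < N - j) F j k + F j (N - j)%N)); last first.
  by move=> j /andP[_ jN]; rewrite subSn // big_nat_recr.
rewrite big_split /= big_nat_recr //= subnn [X in _ + X + _]big_geq // addr0 IH.
by rewrite [RHS]big_nat_recr.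
Qed.

Lemma sum_square_split (V : zmodType) (F : nat -> nat -> V) N :
  \sum_(0 <= j < N) \sum_(0 <= k < N) F j k =
  \sum_(0 <= m < N) \sum_(0 <= j < m.+1) F j (m - j)%N +
  \sum_(0 <= j < N) \sum_(N - j <= k < N) F j k.
Proof.
rewrite -sum_triangle -big_split /=; apply: eq_big_nat => j _.
by apply: big_cat_nat; [exact: leq0n | exact: leq_subr].
Qed.

Section ExponentialOrthogonal.
Variable R : realType.

Lemma sum_invfact_binomial (a b : R) m :
  \sum_(0 <= j < m.+1) invfact R j * invfact R (m - j) * (a ^+ j * b ^+ (m - j)) =
  invfact R m * (a + b) ^+ m.
Proof.
rewrite /invfact addrC exprDn mulr_sumr big_mkord; apply: eq_bigr => i _.
have im : (i <= m)%N by rewrite -ltnS.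
have -> : (m`!%:R : R) = 'C(m, i)%:R * i`!%:R * (m - i)`!%:R.
  by rewrite -!natrM -mulnA bin_fact.
have C0 : ('C(m, i)%:R : R) != 0 by rewrite pnatr_eq0 -lt0n bin_gt0.
have f1 : (i`!%:R : R) != 0 by rewrite pnatr_eq0 -lt0n fact_gt0.
have f2 : ((m - i)`!%:R : R) != 0 by rewrite pnatr_eq0 -lt0n fact_gt0.
by rewrite mulr_natr -mulr_natl; field; rewrite C0 f1 f2.
Qed.

Lemma expm_sum_tr m (W : 'M[R]_m) N : (expm_sum W N)^T = expm_sum W^T N.
Proof.
apply/matrixP => i j; rewrite !mxE !summxE; apply: eq_bigr => k _.
by rewrite !mxE -trmxX mxE.
Qed.

Definition cauchy_term m (W : 'M[R]_m) (j k : nat) : 'M[R]_m :=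
  (invfact R j * invfact R k * (-1) ^+ j) *: W ^+ (j + k).

Lemma expm_sumN_mul m (W : 'M[R]_m) N :
  expm_sum (- W) N *m expm_sum W N =
  \sum_(0 <= j < N) \sum_(0 <= k < N) cauchy_term W j k.
Proof.
rewrite /expm_sum big_mkord mulmx_suml; apply: eq_bigr => j _.
rewrite big_mkord mulmx_sumr; apply: eq_bigr => k _.
rewrite exprNmx scalerA -scalemxAl -scalemxAr scalerA mulmxE -exprD.
by congr (_ *: _); ring.
Qed.

Lemma sum_cauchy_diag m (W : 'M[R]_m) N : (0 < N)%N ->
  \sum_(0 <= d < N) \sum_(0 <= j < d.+1) cauchy_term W j (d - j) = 1.
Proof.
move=> N0.
have diag d : \sum_(0 <= j < d.+1) cauchy_term W j (d - j) =
    (invfact R d * 0 ^+ d) *: W ^+ d.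
  rewrite -(addNr (1 : R)) -sum_invfact_binomial scaler_suml.
  apply: eq_big_nat => j /andP[_]; rewrite ltnS => jd.
  by rewrite /cauchy_term subnKC // expr1n mulr1.
rewrite (eq_big_nat _ _ (fun d _ => diag d)) big_ltn //.
rewrite expr0 mulr1 /invfact invr1 scale1r big1_seq ?addr0 // => d /andP[_].
by rewrite mem_index_iota => /andP[d1 _]; rewrite expr0n gtn_eqF // mulr0 scale0r.
Qed.

(* Majorant of the terms [j + k >= N] of the product of the partial sums of [exp(-W)] and
   [exp(W)]. *)
Definition cauchy_rest (w : R) N :=
  \sum_(0 <= j < N) \sum_(N - j <= k < N) invfact R j * invfact R k * w ^+ (j + k).

Lemma cauchy_restE (w : R) N :
  cauchy_rest w N = series (exp_coeff w) N ^+ 2 - series (exp_coeff (w + w)) N.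
Proof.
have -> : series (exp_coeff w) N ^+ 2 =
    \sum_(0 <= j < N) \sum_(0 <= k < N) invfact R j * invfact R k * w ^+ (j + k).
  rewrite seriesEnat /= expr2 mulr_suml; apply: eq_bigr => j _.
  rewrite mulr_sumr; apply: eq_bigr => k _.
  by rewrite /exp_coeff /= /invfact exprD; ring.
rewrite sum_square_split seriesEnat /=.
rewrite [X in X + _ - _](_ : _ = \sum_(0 <= d < N) exp_coeff (w + w) d).
  by rewrite addrAC subrr add0r.
apply: eq_bigr => d _; rewrite /exp_coeff /= mulrC -sum_invfact_binomial.
by apply: eq_big_nat => j /andP[_]; rewrite ltnS => jd; rewrite -exprD subnKC.
Qed.

Lemma cauchy_rest_cvg (w : R) : cauchy_rest w @ \oo --> 0.
Proof.
have -> : cauchy_rest w =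
    series (exp_coeff w) \* series (exp_coeff w) - series (exp_coeff (w + w)).
  by apply/funext => N; rewrite cauchy_restE /= expr2.
rewrite -(subrr (expR (w + w))) [X in _ --> X - _]expRD.
by apply: cvgB; [apply: cvgM|]; exact: is_cvg_series_exp_coeff.
Qed.

Lemma spnorm_expm_sumN_mul_sub1 m (W : 'M[R]_m) N : (0 < N)%N ->
  spnorm (expm_sum (- W) N *m expm_sum W N - 1) <= cauchy_rest (spnorm W) N.
Proof.
move=> N0; rewrite expm_sumN_mul sum_square_split sum_cauchy_diag // addrAC subrr add0r.
apply: le_trans (spnorm_sum _ _ _) _; apply: ler_sum => j _.
apply: le_trans (spnorm_sum _ _ _) _; apply: ler_sum => k _.
apply: le_trans (spnormZ _ _) _.
have c0 : 0 <= invfact R j * invfact R k by rewrite mulr_ge0 ?(ltW (invfact_gt0 _ _)).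
rewrite normrM normrX normrN normr1 expr1n mulr1 ger0_norm //.
by rewrite ler_wpM2l // spnormX.
Qed.

Lemma expm_sumN_mul_cvg m (W : 'M[R]_m) :
  mxcvg (fun N => expm_sum (- W) N *m expm_sum W N) 1.
Proof.
move=> i j.
have dev_cvg : (fun N => (expm_sum (- W) N *m expm_sum W N - 1) i j) @ \oo --> (0 : R).
  apply: (@squeeze_cvgr _ _ _ _ (- cauchy_rest (spnorm W)) (cauchy_rest (spnorm W))).
  - exists 1%N => // N /= N0; rewrite -ler_norml.
    exact: le_trans (spnorm_entry _ _ _) (spnorm_expm_sumN_mul_sub1 W N0).
  - by rewrite -oppr0; apply: cvgN; exact: cauchy_rest_cvg.
  - exact: cauchy_rest_cvg.
rewrite -[X in _ --> X]add0r.
under eq_fun do rewrite -[expm_sum _ _ *m _](subrK 1) mxE.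
by apply: cvgD => //; exact: cvg_cst.
Qed.

Lemma expm_skew_orth m (W : 'M[R]_m) : W^T = - W -> (expm W)^T *m expm W = 1%:M.
Proof.
move=> skewW; rewrite idmxE.
apply: (mxcvg_uniq (mxcvgM (mxcvg_tr (expm_sum_cvg (W := W))) (expm_sum_cvg (W := W)))).
by move=> i j; under eq_fun do rewrite expm_sum_tr skewW; exact: expm_sumN_mul_cvg.
Qed.

End ExponentialOrthogonal.

Section Rayleigh.
Variable R : realType.

Definition qform {n} (A : 'M[R]_n) (x : 'cV[R]_n) : R := (x^T *m A *m x) 0 0.

Lemma qform_dotv n (A : 'M[R]_n) x : qform A x = dotv x (A *m x).
Proof. by rewrite /qform dotv_mx mulmxA. Qed.

Lemma qform0 n (A : 'M[R]_n) : qform A 0 = 0.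
Proof. by rewrite /qform mulmx0 mxE. Qed.

Lemma qformN n (A : 'M[R]_n) x : qform (- A) x = - qform A x.
Proof. by rewrite /qform mulmxN mulNmx mxE. Qed.

Lemma qformZ n (A : 'M[R]_n) a x : qform A (a *: x) = a ^+ 2 * qform A x.
Proof.
rewrite !qform_dotv -scalemxAr /dotv mulr_sumr; apply: eq_bigr => i _.
by rewrite !mxE; ring.
Qed.

Lemma qformD n (A : 'M[R]_n) x y : A^T = A ->
  qform A (x + y) = qform A x + 2 * dotv y (A *m x) + qform A y.
Proof.
move=> symA; have dotv_sym : dotv x (A *m y) = dotv y (A *m x).
  have dotvC u v : dotv u v = dotv v u by apply: eq_bigr => i _; rewrite mulrC.
  by rewrite dotvC !dotv_mx trmx_mul symA mulmxA.
rewrite !qform_dotv -dotv_sym mulmxDr.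
have -> : dotv (x + y) (A *m x + A *m y) =
    dotv x (A *m x) + dotv x (A *m y) + dotv y (A *m x) + dotv y (A *m y).
  by rewrite /dotv -!big_split /=; apply: eq_bigr => i _; rewrite !mxE; ring.
by rewrite dotv_sym; ring.
Qed.

Lemma normr_qform_le n (A : 'M[R]_n) x : `|qform A x| <= spnorm A * sqnorm x.
Proof.
have le y : vnorm y = vnorm x -> dotv y (A *m x) <= spnorm A * sqnorm x.
  move=> yx; rewrite (le_trans (dotv_le _ _)) // yx -vnorm_sqr expr2 mulrCA.
  by rewrite ler_wpM2l ?vnorm_ge0 ?spnorm_ub.
rewrite qform_dotv ler_norml le ?andbT //.
have -> : dotv x (A *m x) = - dotv (- x) (A *m x).
  by rewrite /dotv -sumrN; apply: eq_bigr => i _; rewrite [(- x) _ _]mxE mulNr opprK.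
by rewrite lerN2 le ?vnormN.
Qed.

Lemma dotvZl n (a : R) (u v : 'cV[R]_n) : dotv (a *: u) v = a * dotv u v.
Proof. by rewrite /dotv mulr_sumr; apply: eq_bigr => i _; rewrite mxE mulrA. Qed.

Lemma psd_cauchy_schwarz n (B : 'M[R]_n) x y : B^T = B -> (forall z, 0 <= qform B z) ->
  dotv y (B *m x) ^+ 2 <= qform B y * qform B x.
Proof.
move=> symB psdB; rewrite mulrC; apply: quad_ge0_discr => // t.
by have := psdB (x + t *: y); rewrite qformD // qformZ dotvZl; lra.
Qed.

Lemma sqnorm_mulmx_psd n (B : 'M[R]_n) x : B^T = B -> (forall z, 0 <= qform B z) ->
  sqnorm (B *m x) <= spnorm B * qform B x.
Proof.
move=> symB psdB; have [Bx0|Bx_gt0] := eqVneq (sqnorm (B *m x)) 0.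
  by rewrite Bx0 mulr_ge0 ?spnorm_ge0.
have {}Bx_gt0 : 0 < sqnorm (B *m x) by rewrite lt_def Bx_gt0 sqnorm_ge0.
rewrite -(ler_pM2l Bx_gt0) -expr2.
have sq : sqnorm (B *m x) = dotv (B *m x) (B *m x) by rewrite dotv_mx -sqnorm_mx.
rewrite {1}sq (le_trans (psd_cauchy_schwarz x (B *m x) symB psdB)) //.
rewrite mulrA [_ * spnorm B]mulrC ler_wpM2r ?psdB //.
by apply: le_trans (ler_norm _) (normr_qform_le _ _).
Qed.

Lemma psd_unitmx_coercive n (B : 'M[R]_n) : B^T = B -> (forall z, 0 <= qform B z) ->
  B \in unitmx -> exists2 K, 0 < K & forall x, sqnorm x <= K * qform B x.
Proof.
move=> symB psdB Bu; exists (spnorm (invmx B) ^+ 2 * spnorm B + 1) => [|x].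
  by rewrite ltr_pwDr ?mulr_ge0 ?exprn_ge0 ?spnorm_ge0.
rewrite mulrDl mul1r -[sqnorm x]addr0 lerD ?psdB // -mulrA.
have : vnorm x <= spnorm (invmx B) * vnorm (B *m x).
  by rewrite -{1}(mulKmx Bu x) spnorm_ub.
have := sqnorm_mulmx_psd x symB psdB; rewrite -!vnorm_sqr.
have := vnorm_ge0 x; have := spnorm_ge0 (invmx B); nra.
Qed.

Lemma exists_unit_vector n : (0 < n)%N -> exists x : 'cV[R]_n, vnorm x = 1.
Proof. by move=> n0; exists (delta_mx (Ordinal n0) 0); exact: vnorm_delta. Qed.

Lemma qform_ge_unit n (A : 'M[R]_n) c :
  (forall u, vnorm u = 1 -> c <= qform A u) -> forall x, c * sqnorm x <= qform A x.
Proof.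
move=> cle x; have [->|x0] := eqVneq x 0; first by rewrite sqnorm0 qform0 mulr0.
have x_gt0 := vnorm_gt0 x0.
have u1 : vnorm ((vnorm x)^-1 *: x) = 1.
  by rewrite vnormZ ger0_norm ?invr_ge0 ?vnorm_ge0 // mulVf // gt_eqF.
have := cle _ u1; rewrite qformZ -vnorm_sqr exprVn.
by rewrite ler_pdivlMl ?exprn_gt0 // mulrC.
Qed.

(* The minimum of the Rayleigh quotient is an eigenvalue: otherwise [A - mu] would be
   invertible and positive semidefinite, hence coercive, contradicting minimality. *)
Lemma exists_min_eigenvalue n (A : 'M[R]_n) : A^T = A -> (0 < n)%N ->
  exists2 mu, eigenvalue A mu & forall x, mu * sqnorm x <= qform A x.
Proof.
move=> symA n0; set S := [set qform A x | x in [set x | vnorm x = 1]].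
have S_lb : has_lbound S.
  exists (- spnorm A) => _ [x /= x1 <-].
  by have := normr_qform_le A x; rewrite -vnorm_sqr x1 expr1n mulr1 ler_norml => /andP[].
have S_ne : S !=set0 by have [x x1] := exists_unit_vector n0; exists (qform A x), x.
set mu := inf S.
have mu_le : forall x, mu * sqnorm x <= qform A x.
  by apply: qform_ge_unit => u u1; apply: (ge_inf S_lb); exists u.
exists mu => //; set B := A - mu%:M.
have qformB x : qform B x = qform A x - mu * sqnorm x.
  rewrite !qform_dotv /B mulmxBl mul_scalar_mx /dotv /sqnorm mulr_sumr -sumrB.
  by apply: eq_bigr => i _; rewrite !mxE; ring.
have symB : B^T = B by rewrite /B linearB /= tr_scalar_mx symA.
have psdB x : 0 <= qform B x by rewrite qformB subr_ge0.
rewrite /eigenvalue /eigenspace -/B kermx_eq0 row_free_unit.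
apply/negP => /(psd_unitmx_coercive symB psdB) [K K0 coerc].
suff : mu + K^-1 <= mu by rewrite gerDl leNgt invr_gt0 K0.
apply: lb_le_inf => // _ [x /= x1 <-].
have := coerc x; rewrite qformB -vnorm_sqr x1 expr1n mulr1.
by move=> le1; rewrite [_ + _]addrC -lerBrDr -(ler_pM2l K0) mulfV ?gt_eqF.
Qed.

Lemma eigenvector_qform n (A : 'M[R]_n) a : A^T = A -> eigenvalue A a ->
  exists2 x : 'cV[R]_n, x != 0 & qform A x = a * sqnorm x.
Proof.
move=> symA /eigenvalueP [v Av v0]; exists v^T.
  by apply: contra v0 => /eqP vT0; rewrite -[v]trmxK vT0 linear0.
have : A *m v^T = a *: v^T by rewrite -symA -trmx_mul Av linearZ.
by rewrite /qform -mulmxA => ->; rewrite -scalemxAr mxE -sqnorm_mx.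
Qed.

Lemma lambda_min_spec n (A : 'M[R]_n) : A^T = A -> (0 < n)%N ->
  eigenvalue A (lambda_min A) /\ forall x, lambda_min A * sqnorm x <= qform A x.
Proof.
move=> symA n_gt0; have [mu eig_mu mu_le] := exists_min_eigenvalue symA n_gt0.
suff -> : lambda_min A = mu by [].
have mu_lb a : eigenvalue A a -> mu <= a.
  move=> /(eigenvector_qform symA) [y y0 qy]; have := mu_le y.
  by rewrite qy ler_pM2r // sqnorm_gt0.
apply/eqP; rewrite eq_le; apply/andP; split.
  by apply: (ge_inf _ eig_mu); exists mu.
by apply: lb_le_inf; [exists mu | move=> a /mu_lb].
Qed.

Lemma posdef_lambda_min_gt0 n (A : 'M[R]_n) : (0 < n)%N -> posdef A -> 0 < lambda_min A.
Proof.
move=> n_gt0 [symA posA]; have [eig_min _] := lambda_min_spec symA n_gt0.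
have [x x0 qx] := eigenvector_qform symA eig_min.
by have := posA x x0; rewrite -/(qform A x) qx pmulr_lgt0 // sqnorm_gt0.
Qed.

Lemma lambda_maxE n (A : 'M[R]_n) : lambda_max A = - lambda_min (- A).
Proof.
rewrite /lambda_min /inf opprK; congr sup; apply/seteqP; split => [a eig_a|_ [b eig_b <-]].
  exists (- a); rewrite ?opprK //; apply/eigenvalueP.
  by have /eigenvalueP [v Av v0] := eig_a; exists v; rewrite // mulmxN Av scaleNr.
have /eigenvalueP [v Av v0] := eig_b; apply/eigenvalueP; exists v => //.
by rewrite scaleNr -Av mulmxN opprK.
Qed.

Lemma negdef_posdefN n (A : 'M[R]_n) : negdef A -> posdef (- A).
Proof.
move=> [symA negA]; split => [|x x0]; first by rewrite /symmx linearN /= symA.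
by rewrite -/(qform _ x) qformN oppr_gt0; exact: negA.
Qed.

End Rayleigh.

Section Sylvester.
Variable R : realType.

Definition fdot {m n} (A B : 'M[R]_(m, n)) : R := \sum_i \sum_j A i j * B i j.

Lemma fdotDr m n (A B C : 'M[R]_(m, n)) : fdot A (B + C) = fdot A B + fdot A C.
Proof.
rewrite /fdot -big_split /=; apply: eq_bigr => i _.
by rewrite -big_split /=; apply: eq_bigr => j _; rewrite mxE mulrDr.
Qed.

Lemma fdot_le m n (A B : 'M[R]_(m, n)) :
  fdot A B <= Num.sqrt (frob2 A) * Num.sqrt (frob2 B).
Proof.
apply: le_of_sqr_le; first by rewrite mulr_ge0 ?sqrtr_ge0.
rewrite exprMn !sqr_sqrtr ?frob2_ge0 // /fdot /frob2 !(pair_big xpredT xpredT) /=.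
exact: (cauchy_schwarz_sum (fun p : 'I_m * 'I_n => A p.1 p.2) (fun p => B p.1 p.2)).
Qed.

Lemma frob2_rows m n (A : 'M[R]_(m, n)) : frob2 A = \sum_i sqnorm (row i A)^T.
Proof. by apply: eq_bigr => i _; apply: eq_bigr => j _; rewrite !mxE. Qed.

Lemma frob2_cols m n (A : 'M[R]_(m, n)) : frob2 A = \sum_j sqnorm (col j A).
Proof.
by rewrite /frob2 exchange_big; apply: eq_bigr => j _; apply: eq_bigr => i _; rewrite !mxE.
Qed.

Lemma fdot_mulmxr m n (W : 'M[R]_(m, n)) (X : 'M[R]_n) : X^T = X ->
  fdot W (W *m X) = \sum_i qform X (row i W)^T.
Proof.
move=> symX; apply: eq_bigr => i _; rewrite qform_dotv; apply: eq_bigr => j _.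
rewrite !mxE; congr (_ * _); apply: eq_bigr => k _.
by rewrite -{1}symX !mxE mulrC.
Qed.

Lemma fdot_mulmxl m n (W : 'M[R]_(m, n)) (Y : 'M[R]_m) :
  fdot W (Y *m W) = \sum_j qform Y (col j W).
Proof.
rewrite /fdot exchange_big; apply: eq_bigr => j _; rewrite qform_dotv.
by apply: eq_bigr => i _; rewrite !mxE; congr (_ * _); apply: eq_bigr => k _; rewrite !mxE.
Qed.

Definition sylvester {r s} (X : 'M[R]_r) (Y : 'M[R]_s) (W : 'M[R]_(s, r)) :=
  W *m X + (- Y) *m W.

Lemma fdot_sylvester_ge r s (X : 'M[R]_r) (Y : 'M[R]_s) W :
  X^T = X -> Y^T = Y -> (0 < r)%N -> (0 < s)%N ->
  (lambda_min X - lambda_max Y) * frob2 W <= fdot W (sylvester X Y W).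
Proof.
move=> symX symY r_gt0 s_gt0; have symNY : (- Y)^T = - Y by rewrite linearN /= symY.
have [_ minX] := lambda_min_spec symX r_gt0.
have [_ minNY] := lambda_min_spec symNY s_gt0.
rewrite fdotDr fdot_mulmxr // fdot_mulmxl lambda_maxE opprK mulrDl.
apply: lerD.
  by rewrite frob2_rows mulr_sumr; apply: ler_sum => i _.
by rewrite frob2_cols mulr_sumr; apply: ler_sum => j _.
Qed.

Lemma sylvester_gap_gt0 r s (X : 'M[R]_r) (Y : 'M[R]_s) :
  (0 < r)%N -> (0 < s)%N -> posdef X -> negdef Y -> 0 < lambda_min X - lambda_max Y.
Proof.
move=> r_gt0 s_gt0 posX /negdef_posdefN posNY.
by rewrite lambda_maxE opprK addr_gt0 ?posdef_lambda_min_gt0.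
Qed.

Lemma sylvester_frob_le r s (X : 'M[R]_r) (Y : 'M[R]_s) W :
  (0 < r)%N -> (0 < s)%N -> posdef X -> negdef Y ->
  (lambda_min X - lambda_max Y) * Num.sqrt (frob2 W) <= Num.sqrt (frob2 (sylvester X Y W)).
Proof.
move=> r_gt0 s_gt0 posX negY; have gap := sylvester_gap_gt0 r_gt0 s_gt0 posX negY.
have key := le_trans (fdot_sylvester_ge W posX.1 negY.1 r_gt0 s_gt0) (fdot_le _ _).
have [W0|Wn0] := eqVneq (Num.sqrt (frob2 W)) 0; first by rewrite W0 mulr0 sqrtr_ge0.
have W_gt0 : 0 < Num.sqrt (frob2 W) by rewrite lt_def Wn0 sqrtr_ge0.
by rewrite -(ler_pM2l W_gt0) mulrCA -expr2 sqr_sqrtr ?frob2_ge0.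
Qed.

Lemma sylvester_inj r s (X : 'M[R]_r) (Y : 'M[R]_s) W :
  posdef X -> negdef Y -> sylvester X Y W = 0 -> W = 0.
Proof.
case: r X W => [|r] X W; first by rewrite [W]thinmx0.
case: s Y W => [|s] Y W; first by rewrite [W]flatmx0.
move=> posX negY W0; have gap := sylvester_gap_gt0 (ltn0Sn r) (ltn0Sn s) posX negY.
have := sylvester_frob_le W (ltn0Sn r) (ltn0Sn s) posX negY.
have -> : frob2 (sylvester X Y W) = 0.
  by rewrite W0 /frob2 big1 // => i _; rewrite big1 // => j _; rewrite mxE expr0n.
rewrite sqrtr0 pmulr_rle0 // => frobW0; apply/matrixP => i j; rewrite mxE.
apply/normr0_eq0/eqP; rewrite eq_le normr_ge0 andbT.
exact: le_trans (spnorm_entry W i j) (le_trans (spnorm_le_frob W) frobW0).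
Qed.

Lemma sylvester_surj r s (X : 'M[R]_r) (Y : 'M[R]_s) C :
  posdef X -> negdef Y -> exists W, sylvester X Y W = C.
Proof.
move=> posX negY; pose M := lin_mx (mulmxr X) + lin_mx (mulmx (- Y)).
have vecM W : mxvec W *m M = mxvec (sylvester X Y W).
  by rewrite mulmxDr !mul_vec_lin /= linearD.
have M_unit : M \in unitmx.
  rewrite -row_free_unit -kermx_eq0; apply/eqP/row_matrixP => k.
  rewrite linear0 -[row k _]vec_mxK; apply/eqP; rewrite mxvec_eq0; apply/eqP.
  apply: (sylvester_inj posX negY); apply: (can_inj mxvecK).
  by rewrite -vecM vec_mxK -row_mul mulmx_ker !linear0.
exists (vec_mx (mxvec C *m invmx M)); apply: (can_inj mxvecK).
by rewrite -vecM vec_mxK mulmxKV.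
Qed.

End Sylvester.

Section Step.
Variable R : realType.
Variables r s : nat.
Implicit Types (Z : 'M[R]_(r + s)) (W : 'M[R]_(s, r)).

Lemma Wmat_skew W : (Wmat W)^T = - Wmat W.
Proof.
by rewrite /Wmat tr_block_mx opp_block_mx !trmx0 !oppr0 linearN /= trmxK opprK.
Qed.

Lemma expm_Wmat_orth W : (expm (Wmat W))^T *m expm (Wmat W) = 1%:M.
Proof. exact: expm_skew_orth (Wmat_skew W). Qed.

Lemma step_symmx Z W : symmx Z -> symmx (step Z W).
Proof. by rewrite /symmx /step => symZ; rewrite !trmx_mul trmxK symZ mulmxA. Qed.

Lemma spnorm_step_le Z W : spnorm (step Z W) <= spnorm Z.
Proof.
have E_orth := expm_Wmat_orth W; set E := expm (Wmat W) in E_orth *.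
have ET_orth : E^T^T *m E^T = 1%:M by rewrite trmxK; exact: mulmx1C.
apply: spnorm_le => [|x]; first exact: spnorm_ge0.
by rewrite /step -/E -!mulmxA vnorm_orthmx // -(vnorm_orthmx x E_orth) spnorm_ub.
Qed.

Lemma symmx_block Z : symmx Z -> Z = block_mx (ZX Z) (ZO Z)^T (ZO Z) (ZS Z).
Proof. by move=> symZ; rewrite /ZX /ZO /ZS trmx_dlsub symZ submxK. Qed.

Lemma commutator_Wmat_block Z W : symmx Z -> sylv Z W ->
  Z + (Z *m Wmat W - Wmat W *m Z) =
  block_mx (ZX Z + ((ZO Z)^T *m W + W^T *m ZO Z)) 0
           0 (ZS Z - (ZO Z *m W^T + W *m (ZO Z)^T)).
Proof.
move=> symZ; rewrite /sylv => sylvW.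
have symX : (ZX Z)^T = ZX Z by rewrite /ZX trmx_ulsub symZ.
have symS : (ZS Z)^T = ZS Z by rewrite /ZS trmx_drsub symZ.
rewrite [in LHS](symmx_block symZ) /Wmat !mulmx_block.
rewrite !(mulmx0, mul0mx, addr0, add0r) opp_block_mx !add_block_mx.
congr block_mx.
- by rewrite mulNmx opprK.
- rewrite -sylvW linearD /= !trmx_mul linearN /= symX symS !mulmxN !mulNmx.
  by apply/matrixP => i j; rewrite !mxE; ring.
- by rewrite -sylvW mulNmx; apply/matrixP => i j; rewrite !mxE; ring.
- by rewrite mulmxN opprD.
Qed.

(* With [exp(W) = 1 + D] and [|D| <= |W| + 4/5 |W|^2 <= 8/5 |W|]:
   [2 * 4/5 + (8/5)^2 = 104/25]. *)
Lemma spnorm_step_remainder Z W : spnorm W <= 3 / 4 ->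
  spnorm (step Z W - (Z + (Z *m Wmat W - Wmat W *m Z))) <=
  104 / 25 * spnorm Z * spnorm W ^+ 2.
Proof.
move=> W34; set K := Wmat W; set F := expm K - 1%:M - K.
have K_le : spnorm K <= spnorm W := spnorm_Wmat W.
have F_le : spnorm F <= 4 / 5 * spnorm W ^+ 2.
  rewrite (le_trans (spnorm_expm_tail (le_trans K_le W34))) // ler_wpM2l //.
  by rewrite lerXn2r ?nnegrE ?spnorm_ge0.
have E_eq : expm K = 1%:M + (K + F) by rewrite /F [K + _]addrC subrK addrC subrK.
rewrite /step -/K E_eq congruence_expand ?Wmat_skew // [X in X - _]addrC addrK.
have KF_le : spnorm ((K + F)^T *m Z *m (K + F)) <= (spnorm K + spnorm F) ^+ 2 * spnorm Z.
  rewrite (le_trans (spnormM _ _)) // expr2 mulrAC ler_pM ?mulr_ge0 ?spnorm_ge0 //.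
    by rewrite (le_trans (spnormM _ _)) // spnorm_tr ler_wpM2r ?spnorm_ge0 ?spnormD.
  exact: spnormD.
have ZF_le : spnorm (Z *m F) + spnorm (F^T *m Z) <= 2 * spnorm F * spnorm Z.
  by have := spnormM Z F; have := spnormM F^T Z; rewrite spnorm_tr; lra.
apply: le_trans (spnormD _ _) _.
apply: le_trans (lerD (le_trans (spnormD _ _) ZF_le) KF_le) _.
rewrite -mulrDl [X in _ <= X]mulrAC ler_wpM2r ?spnorm_ge0 //.
have KF_le_W : spnorm K + spnorm F <= 8 / 5 * spnorm W.
  by have := spnorm_ge0 W; nra.
by have := spnorm_ge0 K; have := spnorm_ge0 F; nra.
Qed.

Lemma step_blocks_le Z W : symmx Z -> sylv Z W -> spnorm W <= 3 / 4 ->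
  let c := 2 * spnorm (ZO Z) * spnorm W + 104 / 25 * spnorm Z * spnorm W ^+ 2 in
  [/\ spnorm (ZX (step Z W) - ZX Z) <= c, spnorm (ZS (step Z W) - ZS Z) <= c
    & spnorm (ZO (step Z W)) <= 104 / 25 * spnorm Z * spnorm W ^+ 2].
Proof.
move=> symZ sylvW W34 c; have Rem_le := spnorm_step_remainder Z W34.
set Rem := step Z W - _ in Rem_le.
have stepE : step Z W = Z + (Z *m Wmat W - Wmat W *m Z) + Rem by rewrite addrC subrK.
rewrite stepE commutator_Wmat_block // -[Rem]submxK add_block_mx.
rewrite /ZX /ZS /ZO block_mxKul block_mxKdr block_mxKdl add0r.
have UV_le p q (U V : 'M[R]_(p, q)) : spnorm (U^T *m V + V^T *m U) <= 2 * spnorm U * spnorm V.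
  have := spnormM U^T V; have := spnormM V^T U; rewrite !spnorm_tr.
  by have := spnormD (U^T *m V) (V^T *m U); lra.
split.
- rewrite addrC !addrA addNr add0r (le_trans (spnormD _ _)) // lerD ?UV_le //.
  exact: le_trans (spnorm_lsubmx _) (le_trans (spnorm_usubmx _) Rem_le).
- rewrite addrC !addrA addNr add0r (le_trans (spnormD _ _)) // lerD //.
    by have := UV_le _ _ (ZO Z)^T W^T; rewrite spnormN !trmxK !spnorm_tr.
  exact: le_trans (spnorm_rsubmx _) (le_trans (spnorm_dsubmx _) Rem_le).
- exact: le_trans (spnorm_lsubmx _) (le_trans (spnorm_dsubmx _) Rem_le).
Qed.

End Step.

Section Eta.
Variable R : realType.
Variables r s : nat.
Implicit Types (Z : 'M[R]_(r + s)) (W : 'M[R]_(s, r)).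

Lemma etaZ_ge0 Z : posdef (ZX Z) -> negdef (ZS Z) -> 0 <= etaZ Z.
Proof.
move=> posX negS; rewrite /etaZ.
have [r0|r_gt0] := posnP r.
  by rewrite (_ : minn r s = 0%N) ?r0 ?min0n // sqrtr0 mul0r.
have [s0|s_gt0] := posnP s.
  by rewrite (_ : minn r s = 0%N) ?s0 ?minn0 // sqrtr0 mul0r.
by rewrite divr_ge0 ?sqrtr_ge0 // ltW // sylvester_gap_gt0.
Qed.

Lemma sylv_spnorm_le Z W : posdef (ZX Z) -> negdef (ZS Z) -> sylv Z W ->
  spnorm W <= etaZ Z * spnorm (ZO Z).
Proof.
move=> posX negS sylvW; have eta0 := etaZ_ge0 posX negS.
have [r0|r_gt0] := posnP r.
  have -> : W = 0 by apply/matrixP => i j; have := ltn_ord j; rewrite [X in (_ < X)%N]r0.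
  by rewrite spnorm0 mulr_ge0 ?spnorm_ge0.
have [s0|s_gt0] := posnP s.
  have -> : W = 0 by apply/matrixP => i j; have := ltn_ord i; rewrite [X in (_ < X)%N]s0.
  by rewrite spnorm0 mulr_ge0 ?spnorm_ge0.
have gap := sylvester_gap_gt0 r_gt0 s_gt0 posX negS.
have frobO : Num.sqrt (frob2 (ZO Z)) <= Num.sqrt (minn r s)%:R * spnorm (ZO Z).
  apply: le_of_sqr_le; first by rewrite mulr_ge0 ?sqrtr_ge0 ?spnorm_ge0.
  by rewrite exprMn !sqr_sqrtr ?frob2_ge0 ?ler0n // minnC frob2_le.
apply: le_trans (spnorm_le_frob W) _; rewrite /etaZ mulrAC ler_pdivlMr //.
rewrite mulrC (le_trans _ frobO) //.
by have := sylvester_frob_le W r_gt0 s_gt0 posX negS; rewrite /sylvester sylvW.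
Qed.

Lemma sylv_exists_unique Z : posdef (ZX Z) -> negdef (ZS Z) -> exists! W, sylv Z W.
Proof.
move=> posX negS; have [W sylvW] := sylvester_surj (ZO Z) posX negS.
exists W; split => // W' sylvW'; apply/eqP; rewrite -subr_eq0; apply/eqP.
apply: (sylvester_inj posX negS).
rewrite /sylvester in sylvW *.
by rewrite mulmxBl mulmxBr addrACA -opprD sylvW sylvW' subrr.
Qed.

End Eta.

Lemma iterates_symmx_spnorm (R : realType) r s (Zs : nat -> 'M[R]_(r + s))
    (WOs : nat -> 'M[R]_(s, r)) l :
  symmx (Zs 0%N) -> (forall k, (k < l)%N -> Zs k.+1 = step (Zs k) (WOs k)) ->
  forall k, (k <= l)%N -> symmx (Zs k) /\ spnorm (Zs k) <= spnorm (Zs 0%N).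
Proof.
move=> symZ0 stepE; elim=> [|k IH] kl //; have [symZk Zk_le] := IH (ltnW kl).
rewrite stepE //; split; first exact: step_symmx.
exact: le_trans (spnorm_step_le _ _) Zk_le.
Qed.

Lemma step_bound_arith (R : realFieldType) (e q w z z0 : R) :
  0 <= e -> 0 <= q -> 0 <= w -> 0 <= z -> w <= e * q -> z <= z0 ->
  2 * q * w + 104 / 25 * z * w ^+ 2 <=
  (4 / 9 * e ^+ 4 * z0 ^+ 3 + 4 / 3 * e ^+ 3 * z0 ^+ 2 + 13 / 3 * e ^+ 2 * z0 + 4 * e)
    * q ^+ 2.
Proof.
move=> e0 q0 w0 z_ge0 w_le z_le; have z00 := le_trans z_ge0 z_le.
have w2_le : w ^+ 2 <= (e * q) ^+ 2 by rewrite lerXn2r ?nnegrE ?mulr_ge0.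
have zw2_le : z * w ^+ 2 <= z0 * (e * q) ^+ 2 by rewrite ler_pM ?sqr_ge0.
have high_ge0 : 0 <= (4 / 9 * e ^+ 4 * z0 ^+ 3 + 4 / 3 * e ^+ 3 * z0 ^+ 2) * q ^+ 2.
  by rewrite mulr_ge0 ?sqr_ge0 ?addr_ge0 // !mulr_ge0 ?exprn_ge0.
have eq2_ge0 : 0 <= e * q ^+ 2 by rewrite mulr_ge0 ?sqr_ge0.
have ez0q2_ge0 : 0 <= e ^+ 2 * z0 * q ^+ 2 by rewrite !mulr_ge0 ?exprn_ge0.
by nra.
Qed.

Theorem lemma9 (R : realType) (r s : nat) (lam : 'I_(r + s) -> R)
    (H : 'M[R]_(r + s)) (Zs : nat -> 'M[R]_(r + s)) (WOs : nat -> 'M[R]_(s, r))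
    (l : nat) :
  (forall i j : 'I_(r + s), (i <= j)%N -> lam j <= lam i) ->
  (forall i : 'I_(r + s), (i < r)%N -> 0 < lam i) ->
  (forall i : 'I_(r + s), (r <= i)%N -> lam i < 0) ->
  symmx H ->
  Zs 0%N = diag_mx (\row_i lam i) + H ->
  (forall k, (k < l)%N -> sylv (Zs k) (WOs k) /\ Zs k.+1 = step (Zs k) (WOs k)) ->
  posdef (ZX (Zs l)) ->
  negdef (ZS (Zs l)) ->
  spnorm (ZO (Zs l)) <= 3 / (4 * etaZ (Zs l)) ->
  (exists! W : 'M[R]_(s, r), sylv (Zs l) W) /\
  (forall W : 'M[R]_(s, r), sylv (Zs l) W ->
     spnorm W <= etaZ (Zs l) * spnorm (ZO (Zs l)) /\
     let Z' := step (Zs l) W in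
     let e := etaZ (Zs l) in
     let z0 := spnorm (Zs 0%N) in
     Num.max (spnorm (ZX Z' - ZX (Zs l)))
       (Num.max (spnorm (ZS Z' - ZS (Zs l))) (spnorm (ZO Z')))
     <= (4 / 9 * e ^+ 4 * z0 ^+ 3 + 4 / 3 * e ^+ 3 * z0 ^+ 2
         + 13 / 3 * e ^+ 2 * z0 + 4 * e) * spnorm (ZO (Zs l)) ^+ 2).
Proof.
move=> _ _ _ symH Z0E iterE posX negS O_le.
have symZ0 : symmx (Zs 0%N) by rewrite /symmx Z0E linearD /= tr_diag_mx symH.
have [symZ Z_le] := iterates_symmx_spnorm symZ0 (fun k kl => (iterE k kl).2) (leqnn l).
split; first exact: sylv_exists_unique.
move=> W sylvW; have W_le := sylv_spnorm_le posX negS sylvW; split=> //=.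
have e0 := etaZ_ge0 posX negS.
have eO_le : etaZ (Zs l) * spnorm (ZO (Zs l)) <= 3 / 4.
  have [->|e_neq0] := eqVneq (etaZ (Zs l)) 0; first by rewrite mul0r.
  rewrite mulrC -ler_pdivlMr ?lt_def ?e_neq0 // (le_trans O_le) //.
  by rewrite invfM mulrA.
have [X_le S_le O'_le] := step_blocks_le symZ sylvW (le_trans W_le eO_le).
have bound := step_bound_arith e0 (spnorm_ge0 _) (spnorm_ge0 W) (spnorm_ge0 _) W_le Z_le.
rewrite !ge_max (le_trans X_le bound) (le_trans S_le bound) (le_trans O'_le) //.
by rewrite (le_trans _ bound) // lerDr !mulr_ge0 ?spnorm_ge0.
Qed.
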